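(* If $G$ is a melonic graph, then $d(G)=0$.
   Context: Trees. A 2-rooted ternary tree of order $n$ is a finite plane tree $U$ with a root vertex of degree 2 and $n$ true vertices of degree 4; each edge is internal or a leaf (half-edge). Each true vertex $v$ has parent edge $e_1(v)$ (towards the root) and ordered children edges $e_2(v),e_3(v),e_4(v)$. One root edge has type $\alpha$, the other $\bar\alpha$; if $e_1(v)$ has type $\tau$ then $e_2(v)$ has the other type and $e_3(v),e_4(v)$ have type $\tau$. Leaves of type $\alpha$ are leaves, of type $\bar\alpha$ anti-leaves. A heap-ordering labels true vertices bijectively by $\{1,\dots,n\}$, increasing from parent to child. Graphs. For even $n$, a graph of order $n$ is $G=(U,w,w')$: $U$ heap-ordered; $w$ a bijection leaves $\to$ anti-leaves (dashed edges; internal edges are solid); $w'$ a partition of true vertices into $n/2$ pairs (wavy edges) with, for each pair $\{v,v'\}$ ($v$ of smaller label), one of eight propagators in $(S,j,k)=(S_v,j_v,k_v)$, $(S',j',k')=(S_{v'},j_{v'},k_{v'})$: $\delta_{jj'}\delta_{kk'}$, $\delta_{j,S-j'}\delta_{kk'}$, $\delta_{jj'}\delta_{k,S-k'}$, $\delta_{j,S-j'}\delta_{k,S-k'}$, $\delta_{jk'}\delta_{kj'}$, $\delta_{j,S-k'}\delta_{kj'}$, $\delta_{jk'}\delta_{k,S-j'}$, $\delta_{j,S-k'}\delta_{k,S-j'}$, with $S=S'$; momenta $j_v,S_v-j_v,k_v,S_v-k_v$ sit on the ends at $v$ of $e_1(v),\dots,e_4(v)$. Faces and degree. Edge-ends at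 true vertices and at the root are slots. Each propagator of $\{v,v'\}$, with $S=S'$, identifies each of $j,S-j,k,S-k$ of $v$ with a momentum of $v'$, thus pairs each slot of $v$ with a slot of $v'$ (the four corners of the wavy edge). Let $\Gamma$ be the graph on slots with edges the solid and dashed edges, the corners, and an extra edge joining the two root slots; its components (cycles) are faces, $F(G)$ their number. $E$ is the $(n/2)\times F(G)$ matrix, rows wavy edges $\omega=\{v,v'\}$ ($v$ smaller label), columns faces, $E_{\omega f}$ = #(corners of $\omega$ in $f$ containing $e_1(v)$ or $e_2(v)$) − #(corners of $\omega$ in $f$ containing $e_3(v)$ or $e_4(v)$). $R(G)=\operatorname{rank}E$ ($0$ if $n=0$), $d(G):=n-F(G)+R(G)+1$. Melonic graphs. For two true vertices joined by three edges, the leading propagator is the one whose slot pairing maps the $v$-end of each joining edge to its $v'$-end. The trivial graph ($n=0$) is the root with a leaf and an anti-leaf joined by a dashed edge. A graph is melonic if (ignoring heap-orderings) it arises from the trivial graph by repeatedly inserting two new true vertices $v,v'$, joined to each other by three edges and by a wavy edge carrying the leading propagator, in one of these ways: (I) into a dashed edge $\{x,y\}$: $e_1(v)$ at $x$, $e_1(v')$ at $y$, dashed edges $e_2(v)$–$e_2(v')$ and $\{e_3(v),e_4(v)\}$ bijectively to $\{e_3(v'),e_4(v')\}$; (II) into a dashed edge $\{z,z'\}$: $e_1(v)$ at $z$, $e_1(v')=e_2(v)$, dashed edges $e_2(v')$–$z'$ and $\{e_3(v),e_4(v)\}$ bijectively to $\{e_3(v'),e_4(v')\}$; (III) into a dashed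 edge $\{z,z'\}$: $e_1(v)$ at $z$, $e_1(v')=e_a(v)$ ($a\in\{3,4\}$, $b$ the other), dashed edges $e_2(v)$–(one of $e_3(v'),e_4(v')$), $e_b(v)$–$e_2(v')$, remaining child leaf of $v'$–$z'$; (IIs) into a solid edge from $u$ to child $z$: $v$ below $u$, $e_1(v')=e_2(v)$, $e_1(z)=e_2(v')$, dashed edges $\{e_3(v),e_4(v)\}$ bijectively to $\{e_3(v'),e_4(v')\}$; (IIIs) as (IIs) but $e_1(v')=e_a(v)$, $a\in\{3,4\}$, $e_1(z)=e_c(v')$, $c\in\{3,4\}$, dashed edges $e_2(v)$–(other of $e_3(v'),e_4(v')$) and $e_b(v)$–$e_2(v')$. *)

From mathcomp Require Import all_boot all_order all_algebra.
Set Implicit Arguments. Unset Strict Implicit. Unset Printing Implicit Defensive.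
Import GRing.Theory Num.Theory.

(* True vertices of a graph of order n are 'I_n (label k+1 in the paper is *)
(* k here).  Slots: the two root slots inl 0 (root edge of type alpha) and *)
(* inl 1 (root edge of type anti-alpha), and the slot inr (v,i) = the end  *)
(* at v of the edge e_{i+1}(v), i : 'I_4.                                  *)
(* A graph is given by two involutions on slots:                           *)
(*  - e  ("edges"): pairs the two ends of every solid (internal) edge and  *)
(*       of every dashed edge (leaf -- anti-leaf);                         *)
(*  - c  ("corners"): pairs the slots of v with the slots of its wavy      *)
(*       partner v' according to the propagator, and the two root slots.   *)

Notation slot n := ('I_2 + 'I_n * 'I_4)%type.
Notation gmap n := {ffun slot n -> slot n}.

Definition rt0 {n} : slot n := inl ord0.
Definition rt1 {n} : slot n := inl ord_max.
Definition sl {n} (v : 'I_n) (i : nat) : slot n := inr (v, inord i).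
Definition e1 {n} (v : 'I_n) : slot n := sl v 0.

(* slots that are the upper end of their edge: root slots and child slots *)
Definition is_top {n} (s : slot n) : bool :=
  match s with inl _ => true | inr (_, i) => i != ord0 end.

(* half-edges (leaves or anti-leaves): upper ends not attached to a vertex *)
Definition is_half {n} (e : gmap n) (s : slot n) : bool :=
  is_top s && [forall v : 'I_n, e (e1 v) != s].

(* type of e_1(v) (true = alpha), computed by walking to the root *)
Fixpoint vty {n} (e : gmap n) (fuel : nat) (v : 'I_n) : bool :=
  match fuel with
  | 0 => true
  | f.+1 => match e (e1 v) with
            | inl r => r == ord0
            | inr (u, i) => if nat_of_ord i == 1 then ~~ vty e f u else vty e f u
            end
  end.

(* type of the edge owning a slot: e_2(v) has the other type, e_3, e_4 same *)
Definition sty {n} (e : gmap n) (s : slot n) : bool :=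
  match s with
  | inl r => r == ord0
  | inr (v, i) => if nat_of_ord i == 1 then ~~ vty e n v else vty e n v
  end.

Definition is_leaf {n} (e : gmap n) (s : slot n) := is_half e s && sty e s.
Definition is_antileaf {n} (e : gmap n) (s : slot n) := is_half e s && ~~ sty e s.

Fixpoint anc {n} (e : gmap n) (k : nat) (v : 'I_n) : option 'I_n :=
  match k with
  | 0 => Some v
  | k.+1 => match e (e1 v) with inl _ => None | inr (u, _) => anc e k u end
  end.

(* The eight propagators, as slot pairings (slot i of v |-> slot of v'),  *)
(* read off from the Kronecker deltas with S = S' and momenta             *)
(* j, S-j, k, S-k on slots 0,1,2,3 :                                      *)
(*  d_{jj'}d_{kk'}, d_{j,S-j'}d_{kk'}, d_{jj'}d_{k,S-k'},                 *)
(*  d_{j,S-j'}d_{k,S-k'}, d_{jk'}d_{kj'}, d_{j,S-k'}d_{kj'},              *)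
(*  d_{jk'}d_{k,S-j'}, d_{j,S-k'}d_{k,S-j'}.                              *)
Definition prop_table : seq (seq nat) :=
  [:: [:: 0; 1; 2; 3]; [:: 1; 0; 2; 3]; [:: 0; 1; 3; 2]; [:: 1; 0; 3; 2];
      [:: 2; 3; 0; 1]; [:: 3; 2; 0; 1]; [:: 2; 3; 1; 0]; [:: 3; 2; 1; 0]].
Definition prop (p : 'I_8) (i : 'I_4) : 'I_4 :=
  inord (nth 0 (nth [::] prop_table p) i).

Definition pregraph {n} (e c : gmap n) : Prop :=
  (forall s, e (e s) = s) /\ (forall s, e s != s) /\
  (forall v, is_top (e (e1 v))) /\
  (forall v, exists k, anc e k v = None) /\
  (* dashed edges: w is a bijection leaves -> anti-leaves *)
  (forall s, is_leaf e s -> is_antileaf e (e s)) /\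
  (forall s, is_antileaf e s -> is_leaf e (e s)) /\
  (* corners + extra root edge form an involution *)
  (forall s, c (c s) = s) /\ c rt0 = rt1 /\
  (forall v, exists2 v', v' != v &
     exists p : 'I_8, forall i, c (inr (v, i)) = inr (v', prop p i)).

Definition is_graph {n} (e c : gmap n) : Prop :=
  pregraph e c /\ (forall v u i, e (e1 v) = inr (u, i) -> u < v).

Definition frel {n} (e c : gmap n) : rel (slot n) :=
  fun s t => (t == e s) || (t == c s).
Definition faces {n} (e c : gmap n) : {set {set slot n}} :=
  [set [set t | connect (frel e c) s t] | s : slot n].
Definition mate {n} (c : gmap n) (v : 'I_n) : 'I_n :=
  match c (e1 v) with inr (u, _) => u | inl _ => v end.
(* wavy edges, represented by their vertex of smaller label *)
Definition wavy {n} (c : gmap n) : {set 'I_n} := [set v : 'I_n | (v < mate c v)%N].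

Definition Emx {n} (e c : gmap n) : 'M[rat]_(#|wavy c|, #|faces e c|) :=
  \matrix_(r < #|wavy c|, f < #|faces e c|)
    (\sum_(i < 4) (if inr (@enum_val _ (mem (wavy c)) r, i)
                        \in @enum_val _ (mem (faces e c)) f
                  then (if (i < 2)%N then 1 else -1) else 0))%R.

Definition degree {n} (e c : gmap n) : int :=
  (n%:Z - (#|faces e c|)%:Z + (\rank (Emx e c))%:Z + 1)%R.

Definition triv_map : gmap 0 :=
  [ffun s => match s with inl r => inl (rev_ord r) | inr p => inr p end].

Section Insertion.
Variables (n : nat) (eG cG : gmap n) (eH cH : gmap n.+2).
Variables (phi : 'I_n -> 'I_n.+2) (v v' : 'I_n.+2).

Definition liftS (s : slot n) : slot n.+2 :=
  match s with inl r => inl r | inr (x, i) => inr (phi x, i) end.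

Definition dashedG (x : slot n) : bool := is_top x && is_top (eG x).

Definition keep (x y : slot n) : Prop :=
  forall s, s != x -> s != y -> eH (liftS s) = liftS (eG s).

Definition moveI : Prop := exists x, dashedG x /\ exists b : bool,
  keep x (eG x) /\ eH (liftS x) = sl v 0 /\ eH (liftS (eG x)) = sl v' 0 /\
  eH (sl v 1) = sl v' 1 /\ eH (sl v 2) = sl v' (2 + b) /\
  eH (sl v 3) = sl v' (3 - b).

Definition moveII : Prop := exists z, dashedG z /\ exists b : bool,
  keep z (eG z) /\ eH (liftS z) = sl v 0 /\ eH (sl v 1) = sl v' 0 /\
  eH (sl v' 1) = liftS (eG z) /\
  eH (sl v 2) = sl v' (2 + b) /\ eH (sl v 3) = sl v' (3 - b).

Definition moveIII : Prop := exists z, dashedG z /\ exists a b : bool,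
  keep z (eG z) /\ eH (liftS z) = sl v 0 /\ eH (sl v (2 + a)) = sl v' 0 /\
  eH (sl v 1) = sl v' (2 + b) /\ eH (sl v (3 - a)) = sl v' 1 /\
  eH (sl v' (3 - b)) = liftS (eG z).

Definition moveIIs : Prop := exists t z, eG t = e1 z /\ exists b : bool,
  keep t (e1 z) /\ eH (liftS t) = sl v 0 /\ eH (sl v 1) = sl v' 0 /\
  eH (sl v' 1) = liftS (e1 z) /\
  eH (sl v 2) = sl v' (2 + b) /\ eH (sl v 3) = sl v' (3 - b).

Definition moveIIIs : Prop := exists t z, eG t = e1 z /\ exists a b : bool,
  keep t (e1 z) /\ eH (liftS t) = sl v 0 /\ eH (sl v (2 + a)) = sl v' 0 /\
  eH (sl v' (2 + b)) = liftS (e1 z) /\ eH (sl v 1) = sl v' (3 - b) /\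
  eH (sl v (3 - a)) = sl v' 1.

(* H arises from G by inserting v (upper) and v' with the leading propagator;
   phi embeds the old vertices (arbitrary relabelling: heap orders ignored) *)
Definition insertion_at : Prop :=
  pregraph eH cH /\ injective phi /\ v != v' /\
  (forall x, (phi x != v) && (phi x != v')) /\
  (forall s, cH (liftS s) = liftS (cG s)) /\
  (exists p : 'I_8, (forall i, cH (inr (v, i)) = inr (v', prop p i)) /\
     (* leading: the v-end of each joining edge is paired with its v'-end *)
     (forall i j, eH (inr (v, i)) = inr (v', j) -> prop p i = j)) /\
  (moveI \/ moveII \/ moveIII \/ moveIIs \/ moveIIIs).

End Insertion.

Definition insertion {n} (eG cG : gmap n) (eH cH : gmap n.+2) : Prop :=
  exists phi v v', insertion_at eG cG eH cH phi v v'.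

Inductive melonic : forall n, gmap n -> gmap n -> Prop :=
| melonic_triv : melonic triv_map triv_map
| melonic_ins n (eG cG : gmap n) (eH cH : gmap n.+2) :
    melonic eG cG -> insertion eG cG eH cH -> melonic eH cH.

From Pilot Require Import Defs.
From mathcomp Require Import all_boot all_order all_algebra.
From mathcomp Require Import zify ring.
Set Implicit Arguments. Unset Strict Implicit. Unset Printing Implicit Defensive.
Import GRing.Theory Num.Theory.
Local Open Scope ring_scope.

(* A melonic insertion cuts one edge of G and inserts v, v' joined by three
   edges whose ends the leading propagator also pairs as corners. It therefore
   creates exactly three faces, each made of one slot of v and one of v', while
   every old face survives (the one through the cut edge gains the two new
   edge ends); by induction 2 F(G) = 3 n + 2. The rows of E stay independent:
   in a relation among them, the new face through e_2(v) meets only the wavy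
   edge {v, v'}, which kills its coefficient, and what remains is a relation
   for G. Hence R(G) = n/2 and d(G) = n - (3n + 2)/2 + n/2 + 1 = 0. *)

Definition slot_sign (i : 'I_4) : rat := if (i < 2)%N then 1 else -1.

Definition face_weight {n} (F : {set slot n}) (u : 'I_n) : rat :=
  \sum_(i < 4) (if inr (u, i) \in F then slot_sign i else 0).

Definition face_of {n} (e c : gmap n) (s : slot n) : {set slot n} :=
  [set t | connect (Defs.frel e c) s t].

Definition mate_sign {n} (c : gmap n) (u : 'I_n) : rat :=
  match c (e1 u) with inr (_, j) => slot_sign j | inl _ => 1 end.

Definition row_relation {n} (e c : gmap n) (lam : 'I_n -> rat) : Prop :=
  forall F, F \in faces e c -> \sum_u lam u * face_weight F u = 0.

(* The row of [mate c u] is [mate_sign c u] times the row of [u] (see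
   [face_weight_mate]), so this says that the rows of [Emx e c], one for each
   wavy edge, are linearly independent. *)
Definition wavy_rows_free {n} (e c : gmap n) : Prop :=
  forall lam, row_relation e c lam -> forall u, lam u + mate_sign c u * lam (mate c u) = 0.

Lemma slot_sign_sq i : slot_sign i * slot_sign i = 1.
Proof. by rewrite /slot_sign; case: ifP; rewrite ?mulr1 ?mulrNN. Qed.

Lemma mate_sign_sq n (c : gmap n) u : mate_sign c u * mate_sign c u = 1.
Proof. by rewrite /mate_sign; case: (c (e1 u)) => [r | [_ j]]; rewrite ?mulr1 ?slot_sign_sq. Qed.

Definition prop_entry (p i : nat) : nat := nth 0 (nth [::] prop_table p) i.

(* Each propagator permutes the four slots and maps {e_1, e_2} onto either
   {e_1, e_2} or {e_3, e_4}. *)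
Lemma prop_table_spec : all (fun p => all (fun i =>
    [&& (prop_entry p i < 4)%N,
        (prop_entry p i < 2)%N == ((prop_entry p 0 < 2)%N == (i < 2)%N)
      & all (fun j => (prop_entry p i == prop_entry p j) == (i == j)) (iota 0 4)])
    (iota 0 4)) (iota 0 8).
Proof. by []. Qed.

Lemma prop_entry_spec (p : 'I_8) (i j : 'I_4) : [/\ (prop_entry p i < 4)%N,
   (prop_entry p i < 2)%N = ((prop_entry p 0 < 2)%N == (i < 2)%N) &
   (prop_entry p i == prop_entry p j) = (i == j)].
Proof.
have /allP/(_ (val p)) := prop_table_spec; rewrite mem_iota ltn_ord => /(_ isT).
move=> /allP/(_ (val i)); rewrite mem_iota ltn_ord => /(_ isT).
case/and3P=> lt_i /eqP sign_i /allP/(_ (val j)); rewrite mem_iota ltn_ord => /(_ isT).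
by move=> /eqP.
Qed.

Lemma val_prop (p : 'I_8) i : nat_of_ord (prop p i) = prop_entry p i.
Proof. by rewrite /prop inordK //; case: (prop_entry_spec p i i). Qed.

Lemma prop_inj (p : 'I_8) : injective (prop p).
Proof.
move=> i j eq_ij; apply/eqP; case: (prop_entry_spec p i j) => _ _ <-.
by rewrite -!val_prop eq_ij.
Qed.

Lemma slot_sign_prop (p : 'I_8) i :
  slot_sign (prop p i) = slot_sign (prop p ord0) * slot_sign i.
Proof.
rewrite /slot_sign !val_prop; case: (prop_entry_spec p i i) => _ -> _.
by do 2!case: (_ < 2)%N; rewrite /= ?mulr1 ?mul1r ?mulrNN ?mulN1r ?mulrN1.
Qed.

Lemma inord0 : (inord 0 : 'I_4) = ord0.
Proof. exact/val_inj/inordK. Qed.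

Lemma sl_val n (u : 'I_n) (i : 'I_4) : sl u i = inr (u, i).
Proof. by rewrite /sl inord_val. Qed.

Lemma sl_inj n (u : 'I_n) i j :
  (i < 4)%N -> (j < 4)%N -> (sl u i == sl u j) = (i == j).
Proof. by move=> lt_i lt_j; apply/eqP/eqP => [[/(congr1 val)] | ->] //=; rewrite !inordK. Qed.

Lemma sl_neq n (u u' : 'I_n) i j : u != u' -> sl u i != sl u' j.
Proof. by move=> uu'; apply/eqP => -[] /eqP; rewrite (negbTE uu'). Qed.

Lemma frel_sym n (e c : gmap n) :
  involutive e -> involutive c -> symmetric (Defs.frel e c).
Proof.
move=> eK cK s t; rewrite /Defs.frel.
by apply/idP/idP => /orP [] /eqP ->; rewrite ?eK ?cK eqxx ?orbT.
Qed.

Lemma frel_e n (e c : gmap n) s : Defs.frel e c s (e s).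
Proof. by rewrite /Defs.frel eqxx. Qed.

Lemma frel_c n (e c : gmap n) s : Defs.frel e c s (c s).
Proof. by rewrite /Defs.frel eqxx orbT. Qed.

Lemma connect_homo (T T' : finType) (r : rel T) (r' : rel T') (f : T -> T') :
  (forall s t, r s t -> connect r' (f s) (f t)) ->
  forall s t, connect r s t -> connect r' (f s) (f t).
Proof.
move=> r_r' s _ /connectP [p r_p ->].
by elim: p s r_p => //= y p IHp s /andP [/r_r' r'_sy /IHp]; apply: connect_trans.
Qed.

Lemma mate_of_corner n (c : gmap n) u u' (p : 'I_8) :
  (forall i, c (inr (u, i)) = inr (u', prop p i)) ->
  mate c u = u' /\ mate_sign c u = slot_sign (prop p ord0).
Proof. by rewrite /mate /mate_sign /e1 /sl inord0 => ->. Qed.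

Section Pregraph.
Variables (n : nat) (e c : gmap n).
Hypothesis gP : pregraph e c.

Lemma pregraph_eK : involutive e. Proof. by case: gP. Qed.
Lemma pregraph_cK : involutive c. Proof. by case: gP => _ [_ [_ [_ [_ [_ []]]]]]. Qed.

Lemma corner_pairing u : exists u' (p q : 'I_8), [/\ u' != u,
  forall i, c (inr (u, i)) = inr (u', prop p i),
  forall i, c (inr (u', i)) = inr (u, prop q i) & prop q (prop p ord0) = ord0].
Proof.
have [_ [_ [_ [_ [_ [_ [_ [_ wavy_pair]]]]]]]] := gP.
have [u' u'u [p cu]] := wavy_pair u; have [u'' _ [q cu']] := wavy_pair u'.
have := pregraph_cK (inr (u, ord0)); rewrite cu cu' => -[u''u qp0].
by rewrite u''u in cu'; exists u', p, q.
Qed.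

Lemma mateK : involutive (mate c).
Proof.
move=> u; have [u' [p [q [_ cu cu' _]]]] := corner_pairing u.
by have [-> _] := mate_of_corner cu; have [-> _] := mate_of_corner cu'.
Qed.

Lemma mate_neq u : mate c u != u.
Proof.
have [u' [p [q [u'u cu _ _]]]] := corner_pairing u.
by have [-> _] := mate_of_corner cu.
Qed.

Lemma mate_sign_mate u : mate_sign c (mate c u) = mate_sign c u.
Proof.
have [u' [p [q [_ cu cu' qp0]]]] := corner_pairing u.
have [-> ->] := mate_of_corner cu; have [_ ->] := mate_of_corner cu'.
have sign0 : slot_sign ord0 = 1 by [].
have := slot_sign_prop q (prop p ord0); rewrite qp0 sign0.
move/(congr1 (fun t => t * slot_sign (prop p ord0))).
by rewrite mul1r -mulrA slot_sign_sq mulr1 => ->.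
Qed.

Lemma connect_face_sym : connect_sym (Defs.frel e c).
Proof. exact/sym_connect_sym/frel_sym/pregraph_cK/pregraph_eK. Qed.

Lemma face_of_closed s : closed (Defs.frel e c) (face_of e c s).
Proof. by move=> t w tw; rewrite !inE; apply: (connect_closed connect_face_sym s tw). Qed.

Lemma mem_face_corner F s : F \in faces e c -> (c s \in F) = (s \in F).
Proof. by case/imsetP=> s0 _ ->; apply/esym/face_of_closed/frel_c. Qed.

Lemma face_weight_mate F u :
  F \in faces e c -> face_weight F (mate c u) = mate_sign c u * face_weight F u.
Proof.
move=> Fe; have [u' [p [q [_ cu _ _]]]] := corner_pairing u.
have [-> ->] := mate_of_corner cu.
rewrite /face_weight (reindex_inj (@prop_inj p)) big_distrr /=.
apply: eq_bigr => i _; rewrite -cu mem_face_corner // slot_sign_prop.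
by case: ifP; rewrite ?mulr0.
Qed.

Lemma card_wavy : (2 * #|wavy c|)%N = n.
Proof.
have wavyC : ~: wavy c = mate c @: wavy c.
  apply/setP => u; rewrite in_setC -{2}(mateK u) (mem_imset _ _ (can_inj mateK)).
  rewrite !inE mateK -leqNgt leq_eqVlt.
  by have := mate_neq u; rewrite -(inj_eq val_inj) eq_sym => /negbTE ->.
have := cardsC (wavy c); rewrite wavyC card_imset ?card_ord; last exact: can_inj mateK.
by rewrite mul2n -addnn.
Qed.

Lemma rank_Emx : wavy_rows_free e c -> \rank (Emx e c) = #|wavy c|.
Proof.
move=> free; apply/eqP/inj_row_free => w wE0; apply/rowP => r; rewrite mxE.
pose lam u := \sum_(r' | enum_val r' == u) w 0 r'.
have lam_faces : row_relation e c lam.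
  move=> F Fe; have /rowP/(_ (enum_rank_in Fe F)) := wE0; rewrite !mxE => wEF.
  rewrite -[RHS]wEF (partition_big (@enum_val _ (mem (wavy c))) xpredT) //=.
  apply: eq_bigr => u _; rewrite big_distrl /=; apply: eq_bigr => r' /eqP <-.
  by rewrite mxE enum_rankK_in.
have lam_r : lam (enum_val r) = w 0 r.
  by rewrite /lam (eq_bigl (pred1 r)) ?big_pred1_eq // => r'; rewrite (inj_eq enum_val_inj).
have lam_mate : lam (mate c (enum_val r)) = 0.
  rewrite /lam big_pred0 // => r'; apply/negbTE/eqP => r'_mate.
  have := enum_valP r'; rewrite r'_mate !inE mateK => lt_mate.
  by have := enum_valP r; rewrite inE ltnNge ltnW.
by have := free lam lam_faces (enum_val r); rewrite lam_r lam_mate mulr0 addr0.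
Qed.

End Pregraph.

Definition joins_other_slots {m} (eH : gmap m) (v v' : 'I_m) (jb : nat) : Prop :=
  (forall i, (0 < i < 4)%N -> exists2 j, (j < 4)%N & eH (sl v i) = sl v' j) /\
  (forall j, (j < 4)%N -> j = jb \/ exists2 i, (0 < i < 4)%N & eH (sl v i) = sl v' j).

Lemma joins_other_slots_perm m (eH : gmap m) v v' i1 i2 i3 jb j1 j2 j3 :
  perm_eq [:: i1; i2; i3] [:: 1; 2; 3]%N -> perm_eq [:: jb; j1; j2; j3] (iota 0 4) ->
  eH (sl v i1) = sl v' j1 -> eH (sl v i2) = sl v' j2 -> eH (sl v i3) = sl v' j3 ->
  joins_other_slots eH v v' jb.
Proof.
move=> /perm_mem memI /perm_mem memJ E1 E2 E3.
have ltI i : i \in [:: i1; i2; i3] -> (0 < i < 4)%N by rewrite memI !inE; lia.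
have ltJ j : j \in [:: jb; j1; j2; j3] -> (j < 4)%N by rewrite memJ mem_iota; lia.
split=> [i lt_i | j lt_j].
  have : i \in [:: i1; i2; i3] by rewrite memI !inE; lia.
  rewrite !inE => /or3P[] /eqP ->; [exists j1 | exists j2 | exists j3] => //;
    by apply: ltJ; rewrite !inE eqxx ?orbT.
have : j \in [:: jb; j1; j2; j3] by rewrite memJ mem_iota.
rewrite !inE => /or4P[] /eqP ->;
  [left | right; exists i1 | right; exists i2 | right; exists i3] => //;
  by apply: ltI; rewrite !inE eqxx ?orbT.
Qed.

(* Every melonic move has this shape: the edge {x, eG x} of G (dashed for
   I-III, solid for IIs and IIIs) is cut, its ends are attached to e_1(v) and
   to the slot jb of v', and the three other slots of v are joined to the
   three other slots of v'. *)
Definition splits_edge {n} (eG : gmap n) (eH : gmap n.+2) phi v v' x jb : Prop :=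
  [/\ keep eG eH phi x (eG x), eH (liftS phi x) = sl v 0,
      eH (liftS phi (eG x)) = sl v' jb & joins_other_slots eH v v' jb].

Lemma melonic_move_splits_edge n (eG : gmap n) (eH : gmap n.+2) phi v v' :
  involutive eH ->
  moveI eG eH phi v v' \/ moveII eG eH phi v v' \/ moveIII eG eH phi v v' \/
  moveIIs eG eH phi v v' \/ moveIIIs eG eH phi v v' ->
  exists x jb, splits_edge eG eH phi v v' x jb.
Proof.
move=> eHK [[x [_ [b [kp [ex [ex' [E1 [E2 E3]]]]]]]]
          | [[z [_ [b [kp [ez [E1 [Ez' [E2 E3]]]]]]]]
          | [[z [_ [a [b [kp [ez [Ea [E1 [Ea' Ez']]]]]]]]]
          | [[t [z [Et [b [kp [et [E1 [Ez' [E2 E3]]]]]]]]]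
          | [t [z [Et [a [b [kp [et [Ea [Ez' [E1 Ea']]]]]]]]]]]]]].
- exists x, 0%N; split=> //.
  by apply: (joins_other_slots_perm _ _ E1 E2 E3); case: b {E2 E3}.
- exists z, 1%N; split=> //; first by rewrite -Ez' eHK.
  by apply: (joins_other_slots_perm _ _ E1 E2 E3); case: b {E2 E3}.
- exists z, (3 - b)%N; split=> //; first by rewrite -Ez' eHK.
  by apply: (joins_other_slots_perm _ _ Ea E1 Ea'); case: a {Ea Ea'}; case: b {E1 Ez'}.
- rewrite -Et in kp Ez'; exists t, 1%N; split=> //; first by rewrite -Ez' eHK.
  by apply: (joins_other_slots_perm _ _ E1 E2 E3); case: b {E2 E3}.
- rewrite -Et in kp Ez'; exists t, (2 + b)%N; split=> //; first by rewrite -Ez' eHK.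
  by apply: (joins_other_slots_perm _ _ Ea E1 Ea'); case: a {Ea Ea'}; case: b {E1 Ez'}.
Qed.

Section EdgeSplit.
Variables (n : nat) (eG cG : gmap n) (eH cH : gmap n.+2) (phi : 'I_n -> 'I_n.+2).
Variables (v v' : 'I_n.+2) (x : slot n) (jb : nat).
Hypotheses (eGK : involutive eG) (gH : pregraph eH cH) (phi_inj : injective phi).
Hypotheses (vv' : v != v') (phi_old : forall y, (phi y != v) && (phi y != v')).
Hypothesis cH_lift : forall s, cH (liftS phi s) = liftS phi (cG s).
Hypothesis leading : exists p : 'I_8,
  (forall i, cH (inr (v, i)) = inr (v', prop p i)) /\
  (forall i j, eH (inr (v, i)) = inr (v', j) -> prop p i = j).
Hypotheses (keep_x : keep eG eH phi x (eG x)) (eH_x : eH (liftS phi x) = sl v 0).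
Hypothesis eH_ex : eH (liftS phi (eG x)) = sl v' jb.
Hypothesis joined : joins_other_slots eH v v' jb.

Local Notation L := (liftS phi).
Local Notation a := (sl v 0 : slot n.+2).
Local Notation b := (sl v' jb : slot n.+2).
Local Notation RH := (Defs.frel eH cH).
Local Notation RG := (Defs.frel eG cG).

Let eHK := pregraph_eK gH.
Let cHK := pregraph_cK gH.

Lemma liftS_inj : injective L.
Proof. by case=> [r | [y i]] [r' | [y' i']] //= [] => [-> | /phi_inj -> ->]. Qed.

Lemma liftS_neq_v s i : L s != inr (v, i).
Proof.
by case: s => [r | [y k]] //=; apply/eqP => -[yv _]; have := phi_old y; rewrite yv eqxx.
Qed.

Lemma liftS_neq_v' s i : L s != inr (v', i).
Proof.
by case: s => [r | [y k]] //=; apply/eqP => -[yv _]; have := phi_old y; rewrite yv eqxx andbF.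
Qed.

Lemma phi_image : [set phi z | z : 'I_n] = [set y | (y != v) && (y != v')].
Proof.
apply/eqP; rewrite eqEcard; apply/andP; split.
  by apply/subsetP => y /imsetP [z _ ->]; rewrite inE phi_old.
rewrite card_imset // card_ord.
have -> : [set y | (y != v) && (y != v')] = ~: [set v; v'].
  by apply/setP => y; rewrite !inE negb_or.
by have := cardsC [set v; v']; rewrite cards2 vv' card_ord => /addnI ->.
Qed.

Lemma vertex_cases u : [\/ u = v, u = v' | exists z, u = phi z].
Proof.
case: (eqVneq u v) => [-> | uv]; first by constructor 1.
case: (eqVneq u v') => [-> | uv']; first by constructor 2.
have : u \in [set y | (y != v) && (y != v')] by rewrite inE uv uv'.
by rewrite -phi_image => /imsetP [z _ ->]; constructor 3; exists z.
Qed.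

Lemma slot_cases w : [\/ exists s, w = L s, exists2 i, (i < 4)%N & w = sl v i |
   exists2 i, (i < 4)%N & w = sl v' i].
Proof.
case: w => [r | [y i]]; first by constructor 1; exists (inl r).
case: (vertex_cases y) => [-> | -> | [z ->]].
- by constructor 2; exists i => //; rewrite sl_val.
- by constructor 3; exists i => //; rewrite sl_val.
- by constructor 1; exists (inr (z, i)).
Qed.

Lemma sum_split (f : 'I_n.+2 -> rat) :
  \sum_y f y = \sum_z f (phi z) + f v + f v'.
Proof.
rewrite (bigD1 v) // (bigD1 v') 1?eq_sym //=.
have -> : \sum_(y | (y != v) && (y != v')) f y = \sum_z f (phi z).
  rewrite (eq_bigl [in [set phi z | z : 'I_n]]) => [|y]; last by rewrite phi_image inE.
  by rewrite big_imset //; apply: in2W.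
ring.
Qed.

Lemma joined_corner i : (0 < i < 4)%N -> exists2 j, (j < 4)%N &
  eH (sl v i) = sl v' j /\ cH (sl v i) = sl v' j.
Proof.
move=> i_new; have [j lt_j eH_i] := joined.1 i i_new; exists j => //; split=> //.
have [p [cH_v lead_p]] := leading.
by move: eH_i; rewrite /sl cH_v => /lead_p ->.
Qed.

(* The slot e_1(v) cannot be matched with a joined slot of v', as those are
   already paired with the slots 1..3 of v; so it faces the slot jb. *)
Lemma cH_a : cH a = b.
Proof.
have [p [cH_v _]] := leading.
have cH_v0 : cH a = sl v' (prop p ord0) by rewrite /sl inord0 cH_v inord_val.
rewrite cH_v0; case: (joined.2 _ (ltn_ord (prop p ord0))) => [-> // | [i i_new eH_i]].
have [j lt_j [eH_i' cH_i]] := joined_corner i_new.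
have : cH (sl v i) = cH a by rewrite cH_v0 cH_i -eH_i' eH_i.
move/(can_inj cHK)/eqP; rewrite sl_inj //; last by case/andP: i_new.
by move/eqP=> i0; move: i_new; rewrite i0.
Qed.

Lemma cH_b : cH b = a. Proof. by rewrite -cH_a cHK. Qed.
Lemma eH_a : eH a = L x. Proof. by rewrite -eH_x eHK. Qed.
Lemma eH_b : eH b = L (eG x). Proof. by rewrite -eH_ex eHK. Qed.

Lemma connectH_e w : connect RH w (eH w). Proof. exact/connect1/frel_e. Qed.
Lemma connectH_c w : connect RH w (cH w). Proof. exact/connect1/frel_c. Qed.

Lemma frel_liftS s t : RG s t -> connect RH (L s) (L t).
Proof.
case/orP=> /eqP ->; last by rewrite -cH_lift connectH_c.
case: (eqVneq s x) => [-> | sx].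
  apply: connect_trans (connectH_e _) _; rewrite eH_x.
  by apply: connect_trans (connectH_c _) _; rewrite cH_a -eH_b connectH_e.
case: (eqVneq s (eG x)) => [-> | sex]; last by rewrite -keep_x ?connectH_e.
apply: connect_trans (connectH_e _) _; rewrite eH_ex.
by apply: connect_trans (connectH_c _) _; rewrite cH_b eGK -eH_a connectH_e.
Qed.

Lemma connect_liftS s t : connect RG s t -> connect RH (L s) (L t).
Proof. exact: (@connect_homo _ _ RG RH L frel_liftS). Qed.

Definition lift_face (F : {set slot n}) : {set slot n.+2} :=
  L @: F :|: (if x \in F then [set a; b] else set0).

Lemma mem_lift_face s F : (L s \in lift_face F) = (s \in F).
Proof.
rewrite /lift_face in_setU (mem_imset _ _ liftS_inj).
case: (x \in F); rewrite ?in_set0 ?orbF // in_set2.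
by rewrite (negbTE (liftS_neq_v _ _)) (negbTE (liftS_neq_v' _ _)) !orbF.
Qed.

Lemma lift_face_closed s : closed RH (lift_face (face_of eG cG s)).
Proof.
set F := face_of eG cG s.
have F_e t : t \in F -> eG t \in F by rewrite !inE => /connect_trans; apply; apply/connect1/frel_e.
have F_c t : t \in F -> cG t \in F by rewrite !inE => /connect_trans; apply; apply/connect1/frel_c.
have F_x : (x \in F) = (eG x \in F) by apply/idP/idP => /F_e //; rewrite eGK.
apply: (intro_closed (connect_face_sym gH)) => u w /orP [] /eqP -> {w}.
  case/setUP => [/imsetP [t t_F ->] | ].
    case: (eqVneq t x) => [tx | tx]; first by rewrite tx eH_x /lift_face -tx t_F !inE eqxx orbT.
    case: (eqVneq t (eG x)) => [tex | tex].
      by rewrite tex eH_ex /lift_face F_x -tex t_F !inE eqxx !orbT.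
    by rewrite keep_x // mem_lift_face F_e.
  case: ifP => x_F; rewrite ?in_set0 // in_set2 => /orP [] /eqP ->.
    by rewrite eH_a mem_lift_face.
  by rewrite eH_b mem_lift_face -F_x.
case/setUP => [/imsetP [t t_F ->] | ]; first by rewrite cH_lift mem_lift_face F_c.
case: ifP => x_F; rewrite ?in_set0 // in_set2 => /orP [] /eqP ->.
  by rewrite cH_a /lift_face x_F !inE eqxx !orbT.
by rewrite cH_b /lift_face x_F !inE eqxx !orbT.
Qed.

Lemma face_of_liftS s : face_of eH cH (L s) = lift_face (face_of eG cG s).
Proof.
apply/setP => w; rewrite [in LHS]inE; apply/idP/idP => [Lsw | ].
  by rewrite -(closed_connect (lift_face_closed s) Lsw) mem_lift_face inE.
case/setUP => [/imsetP [t st ->] | ]; first by rewrite inE in st; exact: connect_liftS.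
case: ifP => [x_F | _]; last by rewrite in_set0.
rewrite inE in x_F.
have Ls_a : connect RH (L s) a.
  by apply: connect_trans (connect_liftS x_F) _; rewrite -eH_x connectH_e.
by rewrite in_set2 => /orP [] /eqP -> //; apply: connect_trans Ls_a _; rewrite -cH_a connectH_c.
Qed.

Lemma face_of_joined i j : eH (sl v i) = sl v' j -> cH (sl v i) = sl v' j ->
  face_of eH cH (sl v i) = [set sl v i; sl v' j].
Proof.
move=> eH_i cH_i; apply/setP => w; rewrite inE; apply/idP/idP => [vi_w | ].
  have cl : closed RH [set sl v i; sl v' j].
    apply: (intro_closed (connect_face_sym gH)) => u w' /orP [] /eqP -> /set2P [] ->.
    - by rewrite eH_i set22.
    - by rewrite -eH_i eHK set21.
    - by rewrite cH_i set22.
    - by rewrite -cH_i cHK set21.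
  by rewrite -(closed_connect cl vi_w) !inE eqxx.
by case/set2P=> ->; rewrite // -eH_i connectH_e.
Qed.

Lemma same_face w w' : connect RH w w' -> face_of eH cH w = face_of eH cH w'.
Proof. by move=> ww'; apply/setP => t; rewrite !inE (same_connect (connect_face_sym gH) ww'). Qed.

Definition new_faces : {set {set slot n.+2}} :=
  [set face_of eH cH (sl v (val k).+1) | k : 'I_3].

Lemma mem_new_face i k : (0 < i < 4)%N -> (0 < k < 4)%N ->
  (sl v k \in face_of eH cH (sl v i)) = (k == i).
Proof.
move=> i_new /andP [_ lt_k]; have [j _ [eH_i cH_i]] := joined_corner i_new.
rewrite (face_of_joined eH_i cH_i) in_set2 (negbTE (sl_neq _ _ vv')) orbF sl_inj //.
by case/andP: i_new.
Qed.

Lemma lifted_face s : face_of eH cH (L s) \in lift_face @: faces eG cG.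
Proof. by rewrite face_of_liftS; apply/imset_f/imset_f. Qed.

Lemma new_face i : (0 < i < 4)%N -> face_of eH cH (sl v i) \in new_faces.
Proof. by case: i => // i /andP [_ lt_i]; apply/imsetP; exists (Ordinal (lt_i : (i < 3)%N)). Qed.

Lemma faces_split : faces eH cH = lift_face @: faces eG cG :|: new_faces.
Proof.
apply/eqP; rewrite eqEsubset; apply/andP; split; last first.
  apply/subsetP => F /setUP [/imsetP [G /imsetP [s _ ->] ->] | /imsetP [k _ ->]].
    by rewrite -face_of_liftS imset_f.
  exact: imset_f.
apply/subsetP => F /imsetP [w _ ->]; rewrite -/(face_of eH cH w); apply/setUP.
case: (slot_cases w) => [[s ->] | [[|i] lt_i ->] | [j lt_j ->]].
- by left; apply: lifted_face.
- by left; rewrite (@same_face _ (L x)) ?lifted_face // -eH_a connectH_e.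
- by right; apply: new_face.
case: (joined.2 j lt_j) => [-> | [i i_new eH_i]].
  by left; rewrite (@same_face _ (L (eG x))) ?lifted_face // -eH_b connectH_e.
by right; rewrite -eH_i -(same_face (connectH_e _)) new_face.
Qed.

Lemma lift_face_inj : injective lift_face.
Proof. by move=> F1 F2 eqF; apply/setP => s; rewrite -!mem_lift_face eqF. Qed.

Lemma card_new_faces : #|new_faces| = 3.
Proof.
rewrite card_imset ?card_ord // => k1 k2 eqk; apply/val_inj/eqP; rewrite -eqSS.
have k_new (k : 'I_3) : (0 < (val k).+1 < 4)%N by case: k.
by have := mem_new_face (k_new k1) (k_new k1); rewrite eqk mem_new_face // eqxx.
Qed.

Lemma new_slot_not_lifted F (k : 'I_3) : sl v (val k).+1 \notin lift_face F.
Proof.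
rewrite /lift_face in_setU negb_or; apply/andP; split.
  by apply/imsetP => -[t _ /eqP]; rewrite eq_sym /sl (negbTE (liftS_neq_v _ _)).
case: ifP => _; rewrite ?in_set0 // in_set2 (negbTE (sl_neq _ _ vv')) orbF sl_inj //.
by case: k.
Qed.

Lemma card_faces_split : #|faces eH cH| = (#|faces eG cG| + 3)%N.
Proof.
rewrite faces_split cardsU card_imset; last exact: lift_face_inj.
suff -> : lift_face @: faces eG cG :&: new_faces = set0 by rewrite card_new_faces cards0 subn0.
apply/setP => F; rewrite !inE; apply/negbTE/andP => -[/imsetP [G _ ->] /imsetP [k _ eqG]].
by have := new_slot_not_lifted G k; rewrite eqG inE connect0.
Qed.

Lemma face_weight_lift_face F z : face_weight (lift_face F) (phi z) = face_weight F z.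
Proof. by apply: eq_bigr => i _; rewrite -[inr (phi z, i)]/(L (inr (z, i))) mem_lift_face. Qed.

Lemma mate_liftS z :
  mate cH (phi z) = phi (mate cG z) /\ mate_sign cH (phi z) = mate_sign cG z.
Proof.
rewrite /mate /mate_sign -[e1 (phi z)]/(L (e1 z)) cH_lift.
by case: (cG (e1 z)) => [r | [y k]].
Qed.

Lemma mate_v : mate cH v = v'.
Proof. by have [p [cH_v _]] := leading; have [] := mate_of_corner cH_v. Qed.

(* The face through e_2(v) consists of e_2(v) and one slot of v'. *)
Lemma new_face_relation lam :
  row_relation eH cH lam -> lam v + mate_sign cH v * lam v' = 0.
Proof.
move=> rel; have [j _ [eH_1 cH_1]] := joined_corner (isT : (0 < 1 < 4)%N).
set F := face_of eH cH (sl v 1).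
have F_H : F \in faces eH cH by apply: imset_f.
have mem_F_v i : (inr (v, i) \in F) = (i == inord 1).
  by rewrite /F (face_of_joined eH_1 cH_1) in_set2 -!sum_eqE /= !xpair_eqE eqxx (negbTE vv') orbF.
have F_old z : face_weight F (phi z) = 0.
  rewrite /F (face_of_joined eH_1 cH_1); apply: big1 => i _.
  rewrite -[inr (phi z, i)]/(L (inr (z, i))) in_set2 /sl.
  by rewrite (negbTE (liftS_neq_v _ _)) (negbTE (liftS_neq_v' _ _)).
have F_v : face_weight F v = 1.
  rewrite /face_weight (bigD1 (inord 1)) // mem_F_v eqxx big1 => [| i /negbTE ni].
    by rewrite /slot_sign inordK.
  by rewrite mem_F_v ni.
have := rel F F_H; rewrite sum_split big1 ?add0r => [| z _]; last by rewrite F_old mulr0.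
rewrite -mate_v (face_weight_mate gH _ F_H) mate_v F_v => rel_F.
by rewrite -[RHS]rel_F; ring.
Qed.

Lemma lift_row_relation lam :
  row_relation eH cH lam -> row_relation eG cG (fun z => lam (phi z)).
Proof.
move=> rel F /imsetP [s _ F_s].
have F_H : lift_face F \in faces eH cH.
  by rewrite (F_s : F = face_of eG cG s) -face_of_liftS imset_f.
have := rel _ F_H; rewrite sum_split -mate_v (face_weight_mate gH _ F_H) mate_v.
under eq_bigr do rewrite face_weight_lift_face.
rewrite -addrA; set w := face_weight _ v; have rel_v := new_face_relation rel.
have -> : lam v * w + lam v' * (mate_sign cH v * w) = (lam v + mate_sign cH v * lam v') * w.
  by ring.
by rewrite rel_v mul0r addr0.
Qed.

Lemma wavy_rows_free_split : wavy_rows_free eG cG -> wavy_rows_free eH cH.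
Proof.
move=> freeG lam rel u; have rel_v := new_face_relation rel.
case: (vertex_cases u) => [-> | -> | [z ->]]; first by rewrite mate_v.
  rewrite -mate_v (mateK gH) (mate_sign_mate gH) mate_v.
  have := congr1 (fun t => mate_sign cH v * t) rel_v.
  by rewrite mulr0 mulrDr mulrA mate_sign_sq mul1r addrC.
by have [-> ->] := mate_liftS z; apply: freeG (lift_row_relation rel) z.
Qed.

End EdgeSplit.

Lemma insertion_invariants n (eG cG : gmap n) (eH cH : gmap n.+2) :
  involutive eG -> insertion eG cG eH cH ->
  [/\ involutive eH, #|faces eH cH| = (#|faces eG cG| + 3)%N &
      wavy_rows_free eG cG -> wavy_rows_free eH cH].
Proof.
move=> eGK [phi [v [v' [gH [phi_inj [vv' [phi_old [cH_lift [leading moves]]]]]]]]].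
have eHK := pregraph_eK gH.
have [x [jb [keep_x eH_x eH_ex joined]]] := melonic_move_splits_edge eHK moves.
split=> //.
  exact: card_faces_split eGK gH phi_inj vv' phi_old cH_lift leading keep_x eH_x eH_ex joined.
exact: wavy_rows_free_split eGK gH phi_inj vv' phi_old cH_lift leading keep_x eH_x eH_ex joined.
Qed.

Lemma triv_mapK : involutive triv_map.
Proof. by case=> [r | [[m lt_m] _]] //; rewrite !ffunE /= rev_ordK. Qed.

Lemma triv_map_cases (s t : slot 0) : t = s \/ t = triv_map s.
Proof.
case: s t => [r | [[] //]] [r' | [[] //]]; rewrite ffunE.
case: r r' => [[|[|//]] ?] [[|[|//]] ?];
  [left | right | right | left]; congr inl; exact: val_inj.
Qed.

Lemma card_faces_triv : #|faces triv_map triv_map| = 1%N.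
Proof.
have face_setT s : face_of triv_map triv_map s = setT.
  apply/setP => t; rewrite !inE.
  by case: (triv_map_cases s t) => ->; [apply: connect0 | apply/connect1/frel_e].
have -> : faces triv_map triv_map = [set setT].
  apply/setP => F; rewrite inE; apply/imsetP/eqP => [[s _ ->] | ->]; first exact: face_setT.
  by exists (inl ord0); rewrite // -/(face_of _ _ _) face_setT.
by rewrite cards1.
Qed.

Lemma melonic_invariants n (e c : gmap n) : melonic e c ->
  [/\ involutive e, wavy_rows_free e c & (2 * #|faces e c| = 3 * n + 2)%N].
Proof.
elim=> [| m eG cG eH cH _ [eGK freeG facesG] /(insertion_invariants eGK) [eHK facesH freeH]].
  by split; [exact: triv_mapK | move=> lam _ [] | rewrite card_faces_triv].
by split; [| exact: freeH | rewrite facesH; lia].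
Qed.

Theorem lemma5 (n : nat) (e c : {ffun slot n -> slot n}) :
  is_graph e c -> melonic e c -> degree e c = 0%R.
Proof.
move=> [gP _] /melonic_invariants [_ free faces].
have := card_wavy gP; rewrite /degree (rank_Emx gP free); lia.
Qed.
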